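(* For $k\in\mathbb N$ let $\mathcal H_k(e^q,J^-)=\frac1k\operatorname{tr}((J^-)^k)$ on $\mathfrak M_{0,-}^{\mathrm{reg}}$ (the restriction of $h_k=\frac1k\Re\operatorname{tr}(J^k)$). Then for every $\mathcal F\in C^\infty(\mathfrak M_{0,-}^{\mathrm{reg}})^{\mathbb T^n}$ and $k\in\mathbb N$, $$\{\mathcal F,\mathcal H_k\}_{2,-}^{\mathrm{red}}=\{\mathcal F,\mathcal H_{k+1}\}_{1,-}^{\mathrm{red}}=\langle\nabla_1\mathcal F,\mathcal V_k[q]\rangle+\langle d_2\mathcal F,\mathcal V_k[J^-]\rangle,$$ where $\mathcal V_k[q]\in\mathcal G_0^-$ has diagonal entries $((J^-)^k)_{jj}$ and $\mathcal V_k[J^-]=[R(q)(J^-)^k,J^-]$. Moreover, if one parametrizes $J^-$ as $(J^-)_{ij}=p_i\delta_{ij}-(1-\delta_{ij})\frac{\xi_{ij}}{\sinh(q_i-q_j)}$ with $p_i\in\mathbb R$ and $\xi$ an anti-Hermitian matrix with zero diagonal, then $$\mathcal H_2=\frac12\sum_{i=1}^np_i^2+\sum_{1\le i<j\le n}\frac{|\xi_{ij}|^2}{\sinh^2(q_i-q_j)},$$ and the functions $\tilde h_k=\frac1k\Im\operatorname{tr}(J^k)$ vanish identically on $\mathfrak M_{0,-}^{\mathrm{reg}}$.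
   Context: $\mathcal G=\mathfrak{gl}(n,\mathbb C)$ (real Lie algebra) with $\langle X,Y\rangle=\Re\operatorname{tr}(XY)$; $\mathcal G^+=\mathfrak u(n)$ (anti-Hermitian), $\mathcal G^-=\mathrm i\,\mathfrak u(n)$ (Hermitian), $X^\pm=\frac12(X\mp X^* )$, $\mathcal G^\pm_0$ the diagonal matrices in $\mathcal G^\pm$. $\mathfrak M_{0,-}^{\mathrm{reg}}=\{(e^q,J^-): J^-\in\mathcal G^-,\ q=\mathrm{diag}(q_1,\dots,q_n),\ q_i\in\mathbb R,\ q_1>\dots>q_n\}$, with the diagonal unitary torus $\mathbb T^n$ acting by $J^-\mapsto\tau J^-\tau^{-1}$. For $\mathcal F\in C^\infty(\mathfrak M_{0,-}^{\mathrm{reg}})$: $\nabla_1\mathcal F\in\mathcal G_0^-$ with $\langle\nabla_1\mathcal F,X_0\rangle=\frac{d}{dt}|_0\mathcal F(e^{q+tX_0},J^-)$ ($X_0\in\mathcal G_0^-$), $d_2\mathcal F\in\mathcal G^-$ with $\langle d_2\mathcal F,X\rangle=\frac{d}{dt}|_0\mathcal F(e^q,J^-+tX)$ ($X\in\mathcal G^-$), $\nabla_2\mathcal F=J^-d_2\mathcal F$. $R(q)\in\mathrm{End}(\mathcal G)$: $(R(q)X)_{ii}=0$, $(R(q)X)_{ij}=X_{ij}\coth(q_i-q_j)$ for $i\ne j$. The Poisson brackets on $C^\infty(\mathfrak M_{0,-}^{\mathrm{reg}})^{\mathbb T^n}$ are $\{\mathcal F,\mathcal H\}_{1,-}^{\mathrm{red}}=\langle\nabla_1\mathcal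 F,d_2\mathcal H\rangle-\langle\nabla_1\mathcal H,d_2\mathcal F\rangle+\langle J^-,[R(q)d_2\mathcal F,d_2\mathcal H]+[d_2\mathcal F,R(q)d_2\mathcal H]\rangle$ and $\{\mathcal F,\mathcal H\}_{2,-}^{\mathrm{red}}=\langle\nabla_1\mathcal F,\nabla_2\mathcal H\rangle-\langle\nabla_1\mathcal H,\nabla_2\mathcal F\rangle+2\langle\nabla_2\mathcal F,R(q)\nabla_2\mathcal H\rangle$ (derivatives at $(e^q,J^-)$). *)

From HB Require Import structures.
From mathcomp Require Import all_boot all_order all_algebra.
From mathcomp Require Import complex.
From mathcomp Require Import all_classical all_reals all_analysis.

Set Implicit Arguments.
Unset Strict Implicit.
Unset Printing Implicit Defensive.

Import Order.TTheory GRing.Theory Num.Theory.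
Import numFieldNormedType.Exports.
Local Open Scope ring_scope.
Local Open Scope complex_scope.

Section Defs.
Variable R : realType.
Variable n : nat.

Local Notation C := (R[i]).
Local Notation Mx := ('M[R[i]]_n).

Definition sinh (x : R) : R := (expR x - expR (- x)) / 2.
Definition cosh (x : R) : R := (expR x + expR (- x)) / 2.
Definition coth (x : R) : R := cosh x / sinh x.

Definition adjmx (A : Mx) : Mx := \matrix_(i, j) conjc (A j i).
Definition hermitian_mx (A : Mx) : Prop := adjmx A = A.
Definition antihermitian_mx (A : Mx) : Prop := adjmx A = - A.

Definition pairing (X Y : Mx) : R := complex.Re (\tr (X *m Y)).

Definition mxcomm (X Y : Mx) : Mx := X *m Y - Y *m X.

(* k-th matrix power (works for every size n) *)
Definition mxpow (A : Mx) (k : nat) : Mx := iter k (fun B => A *m B) 1%:M.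

(* real diagonal matrix (element of G_0^-) attached to q in R^n *)
Definition diagR (v : 'rV[R]_n) : Mx :=
  \matrix_(i, j) if i == j then (v ord0 i)%:C else 0.

Definition Rq (q : 'rV[R]_n) (X : Mx) : Mx :=
  \matrix_(i, j) if i == j then 0 else X i j * (coth (q ord0 i - q ord0 j))%:C.

(* regular_q part: q_1 > ... > q_n, J^- Hermitian *)
Definition regular_q (q : 'rV[R]_n) : Prop :=
  forall i j : 'I_n, (i < j)%N -> q ord0 j < q ord0 i.

(* functions on M_{0,-}^reg, written in the coordinates (q, J^-) *)
Definition fn := 'rV[R]_n -> Mx -> R.

Definition torus_invariant (F : fn) : Prop :=
  forall (u : 'I_n -> C), (forall j, `|u j| = 1) ->
  forall q J, F q ((\matrix_(i, j) if i == j then u i else 0) *m J *m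
                   (\matrix_(i, j) if i == j then conjc (u i) else 0)) = F q J.

(* g is (the vector of diagonal entries of) nabla_1 F at (e^q, J) *)
Definition is_nabla1 (F : fn) (q : 'rV[R]_n) (J : Mx) (g : 'rV[R]_n) : Prop :=
  forall X0 : 'rV[R]_n,
    derivable (fun t : R => F (q + t *: X0) J) 0 1 /\
    'D_1 (fun t : R => F (q + t *: X0) J) 0 = pairing (diagR g) (diagR X0).

Definition is_d2 (F : fn) (q : 'rV[R]_n) (J : Mx) (D : Mx) : Prop :=
  hermitian_mx D /\
  forall X : Mx, hermitian_mx X ->
    derivable (fun t : R => F q (J + t%:C *: X)) 0 1 /\
    'D_1 (fun t : R => F q (J + t%:C *: X)) 0 = pairing D X.

(* reduced Poisson brackets at (e^q, J), from the derivatives of F and H: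
   gF = nabla_1 F, DF = d_2 F, gH = nabla_1 H, DH = d_2 H *)
Definition bracket1 (q : 'rV[R]_n) (J : Mx) (gF : 'rV[R]_n) (DF : Mx)
    (gH : 'rV[R]_n) (DH : Mx) : R :=
  pairing (diagR gF) DH - pairing (diagR gH) DF
  + pairing J (mxcomm (Rq q DF) DH + mxcomm DF (Rq q DH)).

Definition bracket2 (q : 'rV[R]_n) (J : Mx) (gF : 'rV[R]_n) (DF : Mx)
    (gH : 'rV[R]_n) (DH : Mx) : R :=
  pairing (diagR gF) (J *m DH) - pairing (diagR gH) (J *m DF)
  + 2 * pairing (J *m DF) (Rq q (J *m DH)).

(* H_k = (1/k) tr((J^-)^k) (complex-valued expression), and its real
   version Re, i.e. the restriction of h_k = (1/k) Re tr(J^k) *)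
Definition Htr (k : nat) (J : Mx) : C := (k%:R)^-1 * \tr (mxpow J k).
Definition Hk (k : nat) : fn := fun _ J => complex.Re (Htr k J).
Definition htilde (k : nat) : fn := fun _ J => complex.Im (Htr k J).

Definition Vq (k : nat) (J : Mx) : Mx :=
  \matrix_(i, j) if i == j then mxpow J k i i else 0.
Definition VJ (k : nat) (q : 'rV[R]_n) (J : Mx) : Mx :=
  mxcomm (Rq q (mxpow J k)) J.

Definition Jpar (q p : 'rV[R]_n) (xi : Mx) : Mx :=
  \matrix_(i, j) if i == j then (p ord0 i)%:C
                 else - (xi i j / (sinh (q ord0 i - q ord0 j))%:C).

End Defs.

From HB Require Import structures.
From mathcomp Require Import all_boot all_order all_algebra.
From mathcomp Require Import complex.
From mathcomp Require Import all_classical all_reals all_analysis.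
From mathcomp Require Import lra zify.
Import Order.TTheory GRing.Theory Num.Theory.
Import numFieldNormedType.Exports.
Local Open Scope ring_scope.
Local Open Scope complex_scope.

(* Since H_k depends on J alone, nabla_1 H_k = 0, and differentiating
   (1/k) Re tr((J + tX)^k) identifies d_2 H_k = J^(k-1), because the pairing
   Re tr(XY) is positive definite on Hermitian matrices.  Hence
   nabla_2 H_k = J^k = d_2 H_(k+1), and both brackets reduce to
   <nabla_1 F, J^k> + <d_2 F, [R(q) J^k, J]>: the term with R(q) d_2 F drops
   out because J^k commutes with J, and since coth is odd R(q) maps Hermitian
   matrices to anti-Hermitian ones, which turns 2 <J d_2 F, R(q) J^k> into
   <d_2 F, [R(q) J^k, J]>.  The identities hold pointwise, for any F and q.  The last two
   claims are direct computations: tr(J^2) = sum_i p_i^2 + 2 sum_(i<j)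
   |xi_ij|^2 / sinh^2(q_i - q_j), and J^k is Hermitian, so its trace is real. *)

Set Implicit Arguments.
Unset Strict Implicit.
Unset Printing Implicit Defensive.

Lemma sum_symmetric_split (V : zmodType) (n : nat) (f : 'I_n -> 'I_n -> V) :
  (forall i j, f i j = f j i) ->
  \sum_(i < n) \sum_(j < n) f i j =
    \sum_(i < n) f i i + (\sum_(i < n) \sum_(j < n | (i < j)%N) f i j) *+ 2.
Proof.
move=> fC.
have split_row (i : 'I_n) : \sum_(j < n) f i j =
    f i i + \sum_(j < n | (i < j)%N) f i j + \sum_(j < n | (j < i)%N) f i j.
  rewrite (bigD1 i) //= (bigID (fun j : 'I_n => (i < j)%N)) /= addrA.
  by congr (_ + _ + _); apply: eq_bigl => j; rewrite -val_eqE /=; lia.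
rewrite (eq_bigr _ (fun i _ => split_row i)) !big_split /= -addrA mulr2n.
congr (_ + (_ + _)); rewrite (exchange_big_dep xpredT) //=.
by apply: eq_bigr => i _; apply: eq_bigr => j _; exact: fC.
Qed.

Section Corollary.
Variables (R : realType) (n : nat).
Local Notation C := R[i].
Local Notation Mx := 'M[R[i]]_n.

Lemma Re_realM (r : R) (z : C) : complex.Re (r%:C * z) = r * complex.Re z.
Proof. by case: z => a b /=; rewrite mul0r subr0. Qed.

Lemma Im_realM (r : R) (z : C) : complex.Im (r%:C * z) = r * complex.Im z.
Proof. by case: z => a b /=; rewrite mul0r addr0. Qed.

Lemma Re_conjc (z : C) : complex.Re (conjc z) = complex.Re z. Proof. by case: z. Qed.

Lemma Im_conjc (z : C) : complex.Im (conjc z) = - complex.Im z. Proof. by case: z. Qed.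

Lemma conjcM_real (z : C) (r : R) : conjc (z * r%:C) = conjc z * r%:C.
Proof. by case: z => a b; simpc. Qed.

Lemma sinhN (x : R) : sinh (- x) = - sinh x.
Proof. by rewrite /sinh opprK -mulNr opprB. Qed.

Lemma coshN (x : R) : cosh (- x) = cosh x.
Proof. by rewrite /cosh opprK addrC. Qed.

Lemma cothN (x : R) : coth (- x) = - coth x.
Proof. by rewrite /coth sinhN coshN invrN mulrN. Qed.

Lemma adjmxM (A B : Mx) : adjmx (A *m B) = adjmx B *m adjmx A.
Proof.
apply/matrixP => i j; rewrite !mxE rmorph_sum; apply: eq_bigr => k _.
by rewrite !mxE rmorphM mulrC.
Qed.

Lemma adjmxB (A B : Mx) : adjmx (A - B) = adjmx A - adjmx B.
Proof. by apply/matrixP => i j; rewrite !mxE rmorphB. Qed.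

Lemma adjmx1 : adjmx 1%:M = 1%:M :> Mx.
Proof. by apply/matrixP => i j; rewrite !mxE eq_sym conjc_nat. Qed.

Lemma hermitian_entry (A : Mx) i j : hermitian_mx A -> A j i = conjc (A i j).
Proof. by move=> hA; rewrite -[in LHS]hA mxE. Qed.

Lemma mxtrace_adjmx (A : Mx) : \tr (adjmx A) = conjc (\tr A).
Proof. by rewrite /mxtrace rmorph_sum; apply: eq_bigr => i _; rewrite mxE. Qed.

Lemma Re_mxtrace_adjmx (A : Mx) : complex.Re (\tr (adjmx A)) = complex.Re (\tr A).
Proof. by rewrite mxtrace_adjmx Re_conjc. Qed.

Lemma Im_mxtrace_hermitian (A : Mx) : hermitian_mx A -> complex.Im (\tr A) = 0.
Proof.
by move=> hA; have := congr1 (@complex.Im R) (mxtrace_adjmx A); rewrite hA Im_conjc; lra.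
Qed.

Lemma mxpowD (A : Mx) a b : mxpow A (a + b) = mxpow A a *m mxpow A b.
Proof.
elim: a => [|a IH]; first by rewrite add0n mul1mx.
by rewrite addSn /= IH mulmxA.
Qed.

Lemma mxpowSr (A : Mx) k : mxpow A k.+1 = mxpow A k *m A.
Proof. by rewrite -addn1 mxpowD /= mulmx1. Qed.

Lemma mxpow_hermitian (A : Mx) k : hermitian_mx A -> hermitian_mx (mxpow A k).
Proof.
move=> hA; elim: k => [|k IH]; first exact: adjmx1.
by rewrite /hermitian_mx /= adjmxM IH hA -mxpowSr.
Qed.

Lemma pairingC (X Y : Mx) : pairing X Y = pairing Y X.
Proof. by rewrite /pairing mxtrace_mulC. Qed.

Lemma diagR0 : diagR 0 = 0 :> Mx.
Proof. by apply/matrixP => i j; rewrite !mxE; case: eqP. Qed.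

Lemma pairing0l (X : Mx) : pairing 0 X = 0.
Proof. by rewrite /pairing mul0mx mxtrace0. Qed.

Lemma pairingDr (X Y Z : Mx) : pairing X (Y + Z) = pairing X Y + pairing X Z.
Proof. by rewrite /pairing mulmxDr !raddfD. Qed.

Lemma pairingBl (X Y Z : Mx) : pairing (X - Y) Z = pairing X Z - pairing Y Z.
Proof. by rewrite /pairing mulmxBl !raddfB. Qed.

Lemma pairingBr (X Y Z : Mx) : pairing X (Y - Z) = pairing X Y - pairing X Z.
Proof. by rewrite /pairing mulmxBr !raddfB. Qed.

Lemma pairing_mxcomm (X Y Z : Mx) : pairing X (mxcomm Y Z) = pairing (mxcomm Z X) Y.
Proof.
rewrite /mxcomm /pairing mulmxBr mulmxBl !raddfB /= !mulmxA.
by rewrite [\tr (X *m Y *m Z)]mxtrace_mulC mulmxA.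
Qed.

Lemma pairing_mulmx_antihermitian (X Y A : Mx) :
  hermitian_mx X -> hermitian_mx Y -> antihermitian_mx A ->
  pairing (X *m Y) A = - pairing (Y *m X) A.
Proof.
move=> hX hY hA; rewrite /pairing -Re_mxtrace_adjmx !adjmxM hX hY hA.
by rewrite mulNmx !raddfN mulmxA mxtrace_mulC mulmxA.
Qed.

Lemma pairing_diagR (g : 'rV[R]_n) (A : Mx) :
  pairing (diagR g) A = \sum_i g ord0 i * complex.Re (A i i).
Proof.
rewrite /pairing /mxtrace raddf_sum; apply: eq_bigr => i _.
rewrite mxE (bigD1 i) //= big1 ?addr0 => [|j /negbTE ji]; rewrite mxE.
  by rewrite eqxx Re_realM.
by rewrite eq_sym ji mul0r.
Qed.

Lemma pairing_hermitian_self (Z : Mx) : hermitian_mx Z ->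
  pairing Z Z = \sum_i \sum_j (complex.Re (Z i j) ^+ 2 + complex.Im (Z i j) ^+ 2).
Proof.
move=> hZ; rewrite /pairing /mxtrace raddf_sum; apply: eq_bigr => i _.
rewrite mxE raddf_sum; apply: eq_bigr => j _; rewrite (hermitian_entry i j hZ).
by case: (Z i j) => a b /=; rewrite mulrN opprK !expr2.
Qed.

Lemma hermitian_pairing_inj (D E : Mx) : hermitian_mx D -> hermitian_mx E ->
  (forall X, hermitian_mx X -> pairing D X = pairing E X) -> D = E.
Proof.
move=> hD hE DE; apply/eqP; rewrite -subr_eq0; apply/eqP/matrixP => i j.
have hZ : hermitian_mx (D - E) by rewrite /hermitian_mx adjmxB hD hE.
have := pairing_hermitian_self hZ.
rewrite pairingBl DE // subrr.
move=> /esym/eqP; rewrite psumr_eq0 => [/allP/(_ i (mem_index_enum _))|i' _].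
  rewrite psumr_eq0 => [/allP/(_ j (mem_index_enum _))|j' _]; last first.
    by rewrite addr_ge0 ?sqr_ge0.
  rewrite /= paddr_eq0 ?sqr_ge0 // !sqrf_eq0 [RHS]mxE.
  by case: ((D - E) i j) => a b /= /andP[/eqP-> /eqP->].
by rewrite sumr_ge0 // => j' _; rewrite addr_ge0 ?sqr_ge0.
Qed.

Lemma is_nabla1_q_independent (F : fn R n) q J g :
  (forall q', F q' J = F q J) -> is_nabla1 F q J g -> g = 0.
Proof.
move=> Fq /(_ g) [_]; under eq_fun do rewrite Fq.
rewrite derive_cst pairing_diagR => /esym/eqP.
rewrite psumr_eq0 => [/allP gP|i _]; last first.
  by rewrite mxE eqxx /= -expr2 sqr_ge0.
apply/rowP => j; rewrite mxE; have /eqP := gP j (mem_index_enum _).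
by rewrite mxE eqxx /= => /eqP; rewrite mulf_eq0 orbb => /eqP.
Qed.

(* The derivative of t |-> (A + t B)^k at t = 0. *)
Fixpoint mxpow_dir (A B : Mx) (k : nat) : Mx :=
  if k is k'.+1 then A *m mxpow_dir A B k' + B *m mxpow A k' else 0.

Lemma is_derive_Re_mxtrace_mxpow (A B M : Mx) k :
  is_derive (0 : R) 1 (fun t => complex.Re (\tr (M *m mxpow (A + t%:C *: B) k)))
    (complex.Re (\tr (M *m mxpow_dir A B k))).
Proof.
elim: k M => [|k IH] M; first by rewrite /= mulmx0 mxtrace0; exact: is_derive_cst.
pose f N t := complex.Re (\tr (N *m mxpow (A + t%:C *: B) k)).
have -> : (fun t => complex.Re (\tr (M *m mxpow (A + t%:C *: B) k.+1))) =
    f (M *m A) + id * f (M *m B).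
  apply/funext => t; rewrite /f /= mulmxDl mulmxDr !mulmxA -scalemxAr -scalemxAl.
  by rewrite mxtraceD mxtraceZ raddfD /= Re_realM.
apply: is_derive_eq; rewrite scale0r add0r [_%:A]mulr1 /f rmorph0 scale0r addr0.
by rewrite /= mulmxDr !mulmxA mxtraceD raddfD.
Qed.

Lemma mxtrace_mxpow_dir (A B : Mx) k m :
  \tr (mxpow A m *m mxpow_dir A B k) = k%:R * \tr (mxpow A (m + k.-1) *m B).
Proof.
elim: k m => [|k IH] m; first by rewrite /= mulmx0 mxtrace0 mul0r.
rewrite /= mulmxDr mulmxA -mxpowSr mxtraceD IH mulmxA.
rewrite [\tr (mxpow A m *m B *m _)]mxtrace_mulC mulmxA -mxpowD.
case: k {IH} => [|k]; first by rewrite mul0r add0r mul1r addn0 add0n.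
by rewrite addSnnS addnC [k.+2%:R]mulrS mulrDl mul1r addrC.
Qed.

Lemma d2_Hk k q (J D : Mx) :
  hermitian_mx J -> is_d2 (@Hk R n k.+1) q J D -> D = mxpow J k.
Proof.
move=> hJ [hD dHk]; apply: hermitian_pairing_inj => // [|X hX].
  exact: mxpow_hermitian.
have [_ <-] := dHk X hX; set c : C := (k.+1%:R)^-1.
have -> : (fun t => Hk k.+1 q (J + t%:C *: X)) =
    (fun t => complex.Re (\tr (c%:M *m mxpow (J + t%:C *: X) k.+1))).
  by apply/funext => t; rewrite mul_scalar_mx mxtraceZ.
have [_ ->] := is_derive_Re_mxtrace_mxpow J X c%:M k.+1.
rewrite -[mxpow_dir _ _ _]mul1mx -[1%:M]/(mxpow J 0) mul_scalar_mx.
rewrite mxtraceZ mxtrace_mxpow_dir mulrA mulVf ?pnatr_eq0 // mul1r pairingC.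
by rewrite /pairing mxtrace_mulC.
Qed.

Lemma Rq_antihermitian q (P : Mx) : hermitian_mx P -> antihermitian_mx (Rq q P).
Proof.
move=> hP; apply/matrixP => i j; rewrite !mxE eq_sym; case: eqP => _.
  by rewrite conjc0 oppr0.
rewrite conjcM_real (hermitian_entry i j hP) conjcK -opprB cothN.
by rewrite rmorphN mulrN.
Qed.

Lemma bracket_Hk q (J DF : Mx) (gF : 'rV[R]_n) k :
  hermitian_mx J -> hermitian_mx DF ->
  bracket2 q J gF DF 0 (mxpow J k) = bracket1 q J gF DF 0 (mxpow J k.+1) /\
  bracket1 q J gF DF 0 (mxpow J k.+1) =
    pairing (diagR gF) (Vq k.+1 J) + pairing DF (VJ k.+1 q J).
Proof.
move=> hJ hDF; rewrite /bracket1 /bracket2 /VJ diagR0 !pairing0l !subr0.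
change (J *m mxpow J k) with (mxpow J k.+1); set P := mxpow J k.+1.
set A := Rq q P; have hA : antihermitian_mx A.
  exact/Rq_antihermitian/mxpow_hermitian.
have PJ : mxcomm P J = 0 by rewrite /mxcomm -mxpowSr subrr.
have -> : pairing J (mxcomm (Rq q DF) P + mxcomm DF A) = pairing DF (mxcomm A J).
  by rewrite pairingDr 2!pairing_mxcomm PJ pairing0l add0r pairingC.
have -> : 2 * pairing (J *m DF) A = pairing DF (mxcomm A J).
  have AJ : pairing DF (A *m J) = pairing (J *m DF) A.
    by rewrite /pairing mulmxA mxtrace_mulC !mulmxA.
  have JA : pairing DF (J *m A) = - pairing (J *m DF) A.
    by rewrite /pairing mulmxA -/(pairing (DF *m J) A) pairing_mulmx_antihermitian.
  rewrite pairingBr AJ JA; lra.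
split => //; congr (_ + _); rewrite !pairing_diagR; apply: eq_bigr => i _.
by rewrite [Vq _ _ i i]mxE eqxx.
Qed.

Lemma htilde_hermitian k q (J : Mx) : hermitian_mx J -> htilde k q J = 0.
Proof.
move=> hJ; rewrite /htilde /Htr -(rmorph_nat (real_complex R)) -fmorphV Im_realM.
by rewrite Im_mxtrace_hermitian ?mulr0 //; exact: mxpow_hermitian.
Qed.

Lemma mxtrace_mxpow2 (A : Mx) : \tr (mxpow A 2) = \sum_i \sum_j A i j * A j i.
Proof. by apply: eq_bigr => i _; rewrite /= mulmx1 mxE. Qed.

Lemma Jpar_diag (q p : 'rV[R]_n) (xi : Mx) i : Jpar q p xi i i = (p ord0 i)%:C.
Proof. by rewrite mxE eqxx. Qed.

Lemma Jpar_offdiagM (q p : 'rV[R]_n) (xi : Mx) i j : antihermitian_mx xi -> i != j ->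
  Jpar q p xi i j * Jpar q p xi j i =
    `|xi i j| ^+ 2 / ((sinh (q ord0 i - q ord0 j)) ^+ 2)%:C.
Proof.
move=> hxi ij; have xiC : xi j i = - conjc (xi i j).
  by have := congr1 (fun M : Mx => M j i) hxi; rewrite !mxE => ->; rewrite opprK.
rewrite !mxE (negbTE ij) (eq_sym j) (negbTE ij) xiC -[q ord0 j - _]opprB sinhN.
rewrite rmorphN normcE sqr_sqrtc rmorphXn invrN mulrN mulNr opprK mulrNN.
by rewrite mulrACA -expr2 exprVn.
Qed.

Lemma Htr2_Jpar (q p : 'rV[R]_n) (xi : Mx) : antihermitian_mx xi ->
  Htr 2 (Jpar q p xi) =
    ((2%:R)^-1 * \sum_(i < n) p ord0 i ^+ 2)%:C
    + \sum_(i < n) \sum_(j < n | (i < j)%N)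
        `|xi i j| ^+ 2 / ((sinh (q ord0 i - q ord0 j)) ^+ 2)%:C.
Proof.
move=> hxi; rewrite /Htr mxtrace_mxpow2 sum_symmetric_split => [|i j]; last first.
  exact: mulrC.
have -> : \sum_i Jpar q p xi i i * Jpar q p xi i i = (\sum_i p ord0 i ^+ 2)%:C.
  by rewrite rmorph_sum; apply: eq_bigr => i _; rewrite Jpar_diag rmorphXn.
under [\sum_i \sum_(j | _) _]eq_bigr => i _.
  under eq_bigr => j ij.
    have ne : i != j by rewrite -val_eqE /= neq_ltn ij.
    by rewrite (Jpar_offdiagM _ _ hxi ne); over.
  over.
set T := \sum_(i < n) _; rewrite /= mulrDr -(mulr_natl T 2) mulrA.
rewrite mulVf ?pnatr_eq0 // mul1r.
by rewrite rmorphM fmorphV rmorph_nat.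
Qed.

End Corollary.

Theorem corollary4p5 (R : realType) (n : nat) :
  (* the bracket identities, at every point (e^q, J^-) of M_{0,-}^reg *)
  (forall F : fn R n, torus_invariant F ->
   forall k : nat, (0 < k)%N ->
   forall (q : 'rV[R]_n) (J : 'M[R[i]]_n), regular_q q -> hermitian_mx J ->
   forall (gF : 'rV[R]_n) (DF : 'M[R[i]]_n),
     is_nabla1 F q J gF -> is_d2 F q J DF ->
   forall (gH : 'rV[R]_n) (DH : 'M[R[i]]_n),
     is_nabla1 (@Hk R n k) q J gH -> is_d2 (@Hk R n k) q J DH ->
   forall (gH' : 'rV[R]_n) (DH' : 'M[R[i]]_n),
     is_nabla1 (@Hk R n k.+1) q J gH' -> is_d2 (@Hk R n k.+1) q J DH' ->
   bracket2 q J gF DF gH DH = bracket1 q J gF DF gH' DH' /\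
   bracket1 q J gF DF gH' DH' =
     pairing (diagR gF) (Vq k J) + pairing DF (VJ k q J))
  /\
  (* the formula for H_2 in the (q, p, xi) parametrization *)
  (forall (q p : 'rV[R]_n) (xi : 'M[R[i]]_n),
     regular_q q -> antihermitian_mx xi -> (forall i, xi i i = 0) ->
     Htr 2 (Jpar q p xi) =
       ((2%:R)^-1 * \sum_(i < n) p ord0 i ^+ 2)%:C
       + \sum_(i < n) \sum_(j < n | (i < j)%N)
           `|xi i j| ^+ 2 / ((sinh (q ord0 i - q ord0 j)) ^+ 2)%:C)
  /\
  (* htilde_k = (1/k) Im tr(J^k) vanishes on M_{0,-}^reg *)
  (forall k : nat, (0 < k)%N ->
   forall (q : 'rV[R]_n) (J : 'M[R[i]]_n), regular_q q -> hermitian_mx J ->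
     htilde k q J = 0).
Proof.
split; [|split].
- move=> F _ [//|k] _ q J _ hJ gF DF _ [hDF _].
  move=> gH DH /is_nabla1_q_independent -> // /(d2_Hk hJ) ->.
  move=> gH' DH' /is_nabla1_q_independent -> // /(d2_Hk hJ) ->.
  exact: bracket_Hk.
- by move=> q p xi _ hxi _; exact: Htr2_Jpar.
- by move=> k _ q J _; exact: htilde_hermitian.
Qed.
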